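(* Let $n\ge2$, $1<p<\infty$, $R>0$, $\bar\beta>0$ a constant, and let $\rho$ and $f$ be as in the context. Then the function $$g(z)=f(z^{1/n})\,z^{1-\frac1n},\qquad 0\le z\le R^n,$$ is convex on $[0,R^n]$.
   Context: $F:\mathbb R^n\to[0,\infty)$ is convex, even, positively 1-homogeneous, with $a|\xi|\le F(\xi)\le b|\xi|$ ($0<a\le b$), $F\in C^2(\mathbb R^n\setminus\{0\})$, Hessian of $F^p$ positive definite off the origin; $F^o(v)=\sup_{\xi\ne0}\langle\xi,v\rangle/F(\xi)$ and $\mathcal W_R=\{x:F^o(x)<R\}$. $\ell_1(\bar\beta,\mathcal W_R)=\inf_{v\in W^{1,p}(\mathcal W_R),v\not\equiv0}\frac{\int_{\mathcal W_R}F^p(\nabla v)dx+\bar\beta\int_{\partial\mathcal W_R}|v|^pF(\nu)d\mathcal H^{n-1}}{\int_{\mathcal W_R}|v|^pdx}$ ($\nu$ the Euclidean outer normal). It is known that the positive first eigenfunction on $\mathcal W_R$ has the form $v(x)=\rho(F^o(x))$, where $\rho\in C^\infty(]0,R[)\cap C^1([0,R])$ is positive, decreasing, and solves $-(p-1)(-\rho'(r))^{p-2}\rho''(r)+\frac{n-1}{r}(-\rho'(r))^{p-1}=\ell_1(\bar\beta,\mathcal W_R)\rho(r)^{p-1}$ for $r\in]0,R[$, $\rho'(0)=0$, $-(-\rho'(R))^{p-1}+\bar\beta\rho(R)^{p-1}=0$. Define $f(r)=\dfrac{(-\rho'(r))^{p-1}}{\rho(r)^{p-1}}$ for $r\in[0,R]$.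 *)

From mathcomp Require Import all_boot all_order all_algebra.
From mathcomp Require Import all_classical all_reals all_analysis.
Set Implicit Arguments. Unset Strict Implicit. Unset Printing Implicit Defensive.
Import Order.TTheory GRing.Theory Num.Theory.
Import numFieldNormedType.Exports.
Local Open Scope classical_set_scope.
Local Open Scope ring_scope.

Definition is_rel_derive {R : realType} (a b : R) (f : R -> R) (x d : R) : Prop :=
  (fun h : R => h^-1 * (f (x + h) - f x))
    @ within [set h : R | h != 0 /\ a <= x + h <= b] (nbhs (0 : R)) --> d.

Definition C1_closed_with {R : realType} (a b : R) (f df : R -> R) : Prop :=
  {within `[a, b], continuous df} /\
  (forall x, a <= x <= b -> is_rel_derive a b f x (df x)).

Definition Cinf_open {R : realType} (a b : R) (f : R -> R) : Prop :=
  forall (k : nat) (x : R), a < x < b -> derivable (derive1n k f) x 1.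

Definition fratio {R : realType} (p : R) (rho drho : R -> R) (r : R) : R :=
  (- drho r) `^ (p - 1) / (rho r) `^ (p - 1).

Definition gfun {R : realType} (n : nat) (f : R -> R) (z : R) : R :=
  f (z `^ (n%:R)^-1) * z `^ (1 - (n%:R)^-1).

Definition convex_on_itv {R : realType} (a b : R) (g : R -> R) : Prop :=
  forall x y t : R, a <= x <= b -> a <= y <= b -> 0 <= t <= 1 ->
    g (t * x + (1 - t) * y) <= t * g x + (1 - t) * g y.

From mathcomp Require Import all_boot all_order all_algebra.
From mathcomp Require Import all_classical all_reals all_analysis.
From mathcomp Require Import ring lra.
Import Order.TTheory GRing.Theory Num.Theory.
Import numFieldNormedType.Exports.
Local Open Scope classical_set_scope.
Local Open Scope ring_scope.
Set Implicit Arguments. Unset Strict Implicit.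

(** With [u = rho'], [q = -u/rho] and [f = q^(p-1)], the ODE says exactly that
    [(r^(n-1) f)' = r^(n-1) h] where [h = lam + (p-1) q f].  Writing
    [G r = r^(n-1) f r], we have [g z = G (z^(1/n))], so Cauchy's mean value
    theorem for [G] against [r^n] shows that every chord slope of [g] is a value
    [h xi / n] at an intermediate radius.  Hence [g] is convex as soon as [h],
    equivalently [f], is nondecreasing in [r], which follows from a maximum
    principle argument.  Differentiability of [f] inside needs [u < 0] on
    [0 < r < Rad], which the ODE gives once [lam > 0]. *)

Lemma cvg_withinP (R : realType) (A : set R) (f : R -> R) x l :
  f @ within A (nbhs x) --> l <-> forall e, 0 < e ->
    exists2 d, 0 < d & forall t, A t -> `|x - t| < d -> `|l - f t| < e.
Proof.
rewrite cvgrPdist_lt; split => H e e0.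
- have := H e e0; rewrite /within /= => /nbhs_ballP [d /= d0 hd].
  by exists d => // t At xt; apply: hd.
- have [d d0 hd] := H e e0.
  by rewrite /within /=; apply/nbhs_ballP; exists d => //= t xt At; apply: hd.
Qed.

Lemma within_itv_continuousP (R : realType) (a b : R) (f : R -> R) :
  {within `[a, b], continuous f} <->
  forall x, a <= x <= b -> f @ within [set` `[a, b]] (nbhs x) --> f x.
Proof.
split=> [/subspace_continuousP H x hx | H]; first by apply: H; rewrite /= in_itv.
by apply/subspace_continuousP => x; rewrite /= in_itv; exact: H.
Qed.

Lemma cvg_powR (R : realType) (T : Type) (F : set_system T) (FF : Filter F)
  (g : T -> R) (g0 a : R) :
  0 < a -> 0 <= g0 -> (\forall t \near F, 0 <= g t) -> g @ F --> g0 ->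
  (fun t => g t `^ a) @ F --> g0 `^ a.
Proof.
move=> a0 g00 gF gc.
move: g00; rewrite le_eqVlt => /orP [/eqP g0E|g0p]; last first.
  have hc : {for g0, continuous (fun y : R => y `^ a)}.
    apply: differentiable_continuous; apply/derivable1_diffP.
    by apply: derivable_powR; rewrite in_itv /= andbT.
  exact: (continuous_cvg FF hc gc).
subst g0; rewrite powR0 ?gt_eqF //.
apply/cvgrPdist_lt => e e0.
have ea : 0 < e `^ a^-1 by rewrite powR_gt0.
have /(_ FF) gcl := (cvgrPdist_lt _ _).1 gc _ ea.
near=> t.
have gt0 : 0 <= g t by near: t.
have gt : `|0 - g t| < e `^ a^-1 by near: t.
rewrite sub0r normrN ger0_norm ?powR_ge0 //.
move: gt; rewrite sub0r normrN ger0_norm // => gt.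
have := gt0_ltr_powR a0 _ _ gt; rewrite -powRrM mulVf ?gt_eqF // powRr1 ?ltW //.
by apply; rewrite ?nnegrE // ltW.
Unshelve. all: by end_near.
Qed.

Section RelativeDerivative.
Context {R : realType}.
Variables (a b : R) (f : R -> R).

Lemma is_rel_derive_cvg x d : is_rel_derive a b f x d ->
  f @ within [set` `[a, b]] (nbhs x) --> f x.
Proof.
move=> /cvg_withinP /(_ 1 ltr01) [d1 d10 hd1].
apply/cvg_withinP => e e0.
pose K := `|d| + 1.
have K0 : 0 < K by rewrite /K ltr_pwDr.
exists (Num.min d1 (e / K)); first by rewrite lt_min d10 divr_gt0.
move=> t; rewrite /= in_itv /= => ht.
rewrite lt_min => /andP [td1 teK].
have [->|txn] := eqVneq t x; first by rewrite subrr normr0.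
have xt : x + (t - x) = t by ring.
have := hd1 (t - x); rewrite /= sub0r normrN distrC xt.
move=> /(_ (conj _ ht) td1); rewrite subr_eq0 => /(_ txn).
set Q := (t - x)^-1 * _ => hQ.
have hQK : `|Q| < K.
  have : `|Q| <= `|d - Q| + `|d|.
    rewrite {1}(_ : Q = - (d - Q) + d); last by ring.
    by rewrite (le_trans (ler_normD _ _)) // normrN.
  rewrite /K; lra.
have -> : f x - f t = (x - t) * Q by rewrite /Q; field; rewrite subr_eq0.
rewrite normrM.
have cK : e / K * K = e by rewrite divfK // gt_eqF.
move: teK hQK cK (normr_ge0 (x - t)) (normr_ge0 Q).
set u := `|x - t|; set v := `|Q|; set c := e / K => *; nra.
Qed.

Lemma is_rel_derive_is_derive x d : a < x < b -> is_rel_derive a b f x d ->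
  is_derive x 1 f d.
Proof.
move=> /andP [ax xb] /cvg_withinP hd.
have HQ : (fun h : R => h^-1 *: ((f \o shift x) (h *: 1) - f x)) @ 0^' --> d.
  apply/cvg_withinP => e e0.
  have [d0 d00 hd0] := hd e e0.
  exists (Num.min d0 (Num.min (x - a) (b - x))).
    by rewrite !lt_min d00 !subr_gt0 ax xb.
  move=> h /= hn; rewrite !lt_min sub0r normrN => /and3P [hd1 hx1 hR1].
  rewrite [h%:A]mulr1 (addrC h x); apply: hd0; rewrite ?sub0r ?normrN //.
  have /ler_normlP [hl hr] := lexx `|h|.
  by split => //; apply/andP; split; lra.
apply: DeriveDef; first by apply/cvg_ex; exists d.
by rewrite /derive; apply: cvg_lim.
Qed.

Lemma is_rel_derive_le0 x d : a < b -> a <= x <= b ->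
  (forall s t, a <= s <= b -> a <= t <= b -> s <= t -> f t <= f s) ->
  is_rel_derive a b f x d -> d <= 0.
Proof.
move=> ab /andP [ax xb] fdec /cvg_withinP hd.
rewrite leNgt; apply/negP => d0.
have [del del0 hdel] := hd (d / 2) (divr_gt0 d0 (ltr0n _ 2)).
have [h [h0 hab hdelh]] :
    exists h, [/\ h != 0, a <= x + h <= b & `|h| < del].
  have [xb'|bx] := ltP x b.
  - exists (Num.min (del / 2) (b - x)).
    have : 0 < Num.min (del / 2) (b - x) by rewrite lt_min divr_gt0 ?subr_gt0.
    have : Num.min (del / 2) (b - x) <= del / 2 by rewrite ge_min lexx.
    have : Num.min (del / 2) (b - x) <= b - x by rewrite ge_min lexx orbT.
    move=> h1 h2 h3; rewrite gt_eqF // gtr0_norm //; split => //; last lra.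
    by apply/andP; split; lra.
  - exists (- Num.min (del / 2) (b - a)).
    have : 0 < Num.min (del / 2) (b - a) by rewrite lt_min divr_gt0 ?subr_gt0.
    have : Num.min (del / 2) (b - a) <= del / 2 by rewrite ge_min lexx.
    have : Num.min (del / 2) (b - a) <= b - a by rewrite ge_min lexx orbT.
    move=> h1 h2 h3; rewrite oppr_eq0 gt_eqF // normrN gtr0_norm //.
    by split => //; [apply/andP; split; lra | lra].
have hx : a <= x <= b by rewrite ax xb.
have Q0 : h^-1 * (f (x + h) - f x) <= 0.
  have [hn|hp|] := ltgtP h 0; last by move/eqP: h0.
  - apply: mulr_le0_ge0; first by rewrite invr_le0 ltW.
    by rewrite subr_ge0; apply: fdec => //; rewrite gerDl ltW.
  - apply: mulr_ge0_le0; first by rewrite invr_ge0 ltW.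
    by rewrite subr_le0; apply: fdec => //; rewrite lerDl ltW.
have := hdel h (conj h0 hab); rewrite sub0r normrN => /(_ hdelh) /ltr_normlP [].
lra.
Qed.

End RelativeDerivative.

Lemma convex_on_itv_slopes (R : realType) (a b : R) (g : R -> R) :
  (forall x y z, a <= x -> x < y -> y < z -> z <= b ->
     (g y - g x) / (y - x) <= (g z - g y) / (z - y)) ->
  convex_on_itv a b g.
Proof.
move=> slopes x y t /andP [ax xb] /andP [ay yb] /andP [t0 t1].
wlog xy : x y t ax xb ay yb t0 t1 / x < y.
  move=> wl; have [xy|yx|<-] := ltgtP x y; first exact: wl.
  - have e : 1 - (1 - t) = t by ring.
    have := wl y x (1 - t) ay yb ax xb.
    rewrite e (addrC ((1 - t) * y)) (addrC ((1 - t) * g y)).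
    by apply; rewrite ?subr_ge0 ?gerBl.
  - by rewrite -!mulrDl addrC subrK !mul1r.
have [->|t0'] := eqVneq t 0; first by rewrite !mul0r !add0r subr0 !mul1r.
have [->|t1'] := eqVneq t 1; first by rewrite !mul1r subrr !mul0r !addr0.
have tp : 0 < t by rewrite lt_def t0' t0.
have tq : 0 < 1 - t by rewrite subr_gt0 lt_def eq_sym t1' t1.
set mid := t * x + (1 - t) * y.
have e1 : mid - x = (1 - t) * (y - x) by rewrite /mid; ring.
have e2 : y - mid = t * (y - x) by rewrite /mid; ring.
have yx : 0 < y - x by rewrite subr_gt0.
have xm : x < mid by rewrite -subr_gt0 e1 mulr_gt0.
have my : mid < y by rewrite -subr_gt0 e2 mulr_gt0.
have := slopes x mid y ax xm my yb; rewrite e1 e2.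
move=> /(ler_wpM2r (ltW (mulr_gt0 (mulr_gt0 tp tq) yx))).
set A := g mid - g x; set B := g y - g mid.
have -> : A / ((1 - t) * (y - x)) * (t * (1 - t) * (y - x)) = t * A.
  by field; rewrite !gt_eqF.
have -> : B / (t * (y - x)) * (t * (1 - t) * (y - x)) = (1 - t) * B.
  by field; rewrite !gt_eqF.
rewrite /A /B; lra.
Qed.

Lemma exprn_powRV (R : realType) (n : nat) (z : R) : (0 < n)%N -> 0 <= z ->
  (z `^ n%:R^-1) ^+ n = z.
Proof.
move=> n0 z0.
by rewrite -powR_mulrn ?powR_ge0 // -powRrM mulVf ?powRr1 // pnatr_eq0 -lt0n.
Qed.

Lemma powRV_exprn (R : realType) (n : nat) (r : R) : (0 < n)%N -> 0 <= r ->
  (r ^+ n) `^ n%:R^-1 = r.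
Proof.
by move=> n0 r0; rewrite -powR_mulrn // -powRrM mulfV ?powRr1 // pnatr_eq0 -lt0n.
Qed.

Lemma is_derive_exprn (R : realType) (n : nat) (r : R) :
  is_derive r 1 (fun s : R => s ^+ n) (n%:R * r ^+ n.-1).
Proof.
have -> : (fun s : R => s ^+ n) = id ^+ n by rewrite exprfctE.
apply: is_derive_eq (is_deriveX n (is_derive_id r 1)) _.
by rewrite /GRing.scale /= mulr1.
Qed.

Section RadialEigenfunction.
Variables (R : realType) (n : nat) (p Rad beta lam : R) (rho u : R -> R).
Hypotheses (n_gt1 : (1 < n)%N) (p_gt1 : 1 < p).
Hypotheses (Rad_gt0 : 0 < Rad) (beta_gt0 : 0 < beta).
Hypothesis rho_Cinf : Cinf_open 0 Rad rho.
Hypothesis u_cont : {within `[0, Rad], continuous u}.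
Hypothesis rho_u : forall r, 0 <= r <= Rad -> is_rel_derive 0 Rad rho r (u r).
Hypothesis rho_gt0 : forall r, 0 <= r <= Rad -> 0 < rho r.
Hypothesis rho_noninc :
  forall r s, 0 <= r <= Rad -> 0 <= s <= Rad -> r <= s -> rho s <= rho r.
Hypothesis ode : forall r, 0 < r < Rad ->
  - (p - 1) * (- u r) `^ (p - 2) * derive1 u r
  + (n%:R - 1) / r * (- u r) `^ (p - 1) = lam * (rho r) `^ (p - 1).
Hypothesis u0 : u 0 = 0.
Hypothesis robin : - (- u Rad) `^ (p - 1) + beta * (rho Rad) `^ (p - 1) = 0.

Local Notation f := (fratio p rho u).
Local Notation q r := (- u r / rho r).
Local Notation h r := (lam + (p - 1) * (q r * f r)).
Local Notation G r := (r ^+ n.-1 * f r).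

Let p1_gt0 : 0 < p - 1. Proof. by rewrite subr_gt0. Qed.
Let n_gt0 : 0 < n%:R :> R. Proof. by rewrite ltr0n ltnW. Qed.
Let n1E : n%:R - 1 = n.-1%:R :> R.
Proof. by rewrite -subn1 natrB // ltnW. Qed.
Let oo_cc r : 0 < r < Rad -> 0 <= r <= Rad.
Proof. by case/andP => r0 rR; rewrite !ltW. Qed.

Lemma u_le0 r : 0 <= r <= Rad -> u r <= 0.
Proof. by move=> hr; apply: is_rel_derive_le0 Rad_gt0 hr rho_noninc (rho_u hr). Qed.

Lemma rho_is_derive r : 0 < r < Rad -> is_derive r 1 rho (u r).
Proof. by move=> hr; apply: is_rel_derive_is_derive hr (rho_u (oo_cc hr)). Qed.

Lemma u_is_derive r : 0 < r < Rad -> is_derive r 1 u (derive1 u r).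
Proof.
move=> hr; rewrite derive1E; apply: derivableP.
have := @rho_Cinf 1 r hr; apply: near_eq_derivable.
have : \forall s \near r, s \in `]0, Rad[ by apply: near_in_itvoo; rewrite in_itv.
apply: filterS => s; rewrite in_itv /= => hs.
by rewrite derive1E; case: (rho_is_derive hs).
Qed.

Lemma u_Rad_lt0 : u Rad < 0.
Proof.
have hR : 0 <= Rad <= Rad by rewrite lexx ltW.
rewrite lt_neqAle u_le0 // andbT; apply/eqP => uR0; move: robin.
rewrite uR0 oppr0 powR0 ?gt_eqF // oppr0 add0r; apply/eqP.
by rewrite mulf_neq0 ?gt_eqF // powR_gt0 // rho_gt0.
Qed.

Lemma derive1_u_gt0 r : 0 < r < Rad -> u r < 0 -> lam <= 0 -> 0 < derive1 u r.
Proof.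
move=> hr ur lam0; have [r0 rR] := andP hr.
have E := ode hr.
have A : 0 < (n%:R - 1) / r * (- u r) `^ (p - 1).
  by rewrite mulr_gt0 ?divr_gt0 ?powR_gt0 ?oppr_gt0 // subr_gt0 ltr1n.
have B : lam * (rho r) `^ (p - 1) <= 0 by rewrite mulr_le0_ge0 // powR_ge0.
have K : 0 < (p - 1) * (- u r) `^ (p - 2) by rewrite mulr_gt0 ?powR_gt0 ?oppr_gt0.
rewrite -(pmulr_rgt0 _ K); move: E A B K.
set a := (n%:R - 1) / r * _; set b := lam * _; set k := (p - 1) * _ => E.
have -> : k * derive1 u r = a - b by rewrite -E /k; ring.
lra.
Qed.

(* The Robin condition makes [u] negative at [Rad]; were [lam <= 0], [u] would
   be increasing wherever negative, so it could not reach its minimum. *)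
Lemma lam_gt0 : 0 < lam.
Proof.
rewrite ltNge; apply/negP => lam0.
have [c hc cmin] := EVT_min (ltW Rad_gt0) u_cont.
have uc : u c < 0.
  by apply: le_lt_trans u_Rad_lt0; apply: cmin; rewrite in_itv /= lexx ltW.
move: hc; rewrite in_itv /= => hc; have [c0' cR] := andP hc.
have c0 : 0 < c.
  by rewrite lt_neqAle c0' andbT; apply: contraTneq _ uc => <-; rewrite u0 ltxx.
have := (within_itv_continuousP _ _ _).1 u_cont c hc.
move=> /cvg_withinP /(_ (- u c / 2)) [|d d0 hd]; first by rewrite divr_gt0 ?oppr_gt0.
pose del := Num.min (d / 2) (c / 2).
have dl1 : del <= d / 2 by rewrite ge_min lexx.
have dl2 : del <= c / 2 by rewrite ge_min lexx orbT.
have dl3 : 0 < del by rewrite lt_min !divr_gt0.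
have ac : c - del < c by lra.
have hder y : y \in `]c - del, c[ -> is_derive y 1 u (derive1 u y).
  by rewrite in_itv /= => /andP [y1 y2]; apply: u_is_derive; apply/andP; split; lra.
have hcont : {within `[c - del, c], continuous u}.
  apply: continuous_subspaceW u_cont => y; rewrite /= !in_itv /=.
  by move=> /andP [y1 y2]; apply/andP; split; lra.
have [xi /[!in_itv] /= /andP [xi1 xi2] E] := MVT ac hder hcont.
have uxi : u xi < 0.
  have := hd xi; rewrite /= in_itv /=.
  have -> : 0 <= xi <= Rad by apply/andP; split; lra.
  have xd : `|c - xi| < d by rewrite gtr0_norm; lra.
  by move=> /(_ isT xd) /ltr_normlP [h1 h2]; lra.
have hxi : 0 < xi < Rad by apply/andP; split; lra.
have := cmin (c - del); rewrite in_itv /=.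
have -> : 0 <= c - del <= Rad by apply/andP; split; lra.
move=> /(_ isT) cm.
have : 0 < derive1 u xi * (c - (c - del)).
  by rewrite mulr_gt0 ?derive1_u_gt0 // subr_gt0.
lra.
Qed.

Lemma u_lt0 r : 0 < r < Rad -> u r < 0.
Proof.
move=> hr; have [r0 rR] := andP hr.
rewrite lt_neqAle u_le0 ?oo_cc // andbT; apply/eqP => ur0.
have [_ ur'0] : is_derive r 1 u 0.
  apply: (@derive1_at_max _ u 0 Rad r (ltW Rad_gt0)); last 2 first.
  - by rewrite in_itv /= r0.
  - by move=> t /[!in_itv] /= ht; rewrite ur0 u_le0 ?oo_cc.
  by move=> t /[!in_itv] /= ht; case: (u_is_derive ht).
have := ode hr; rewrite derive1E ur'0 ur0 oppr0 mulr0 powR0 ?gt_eqF //.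
rewrite mulr0 add0r => /esym /eqP.
by rewrite mulf_eq0 gt_eqF ?lam_gt0 //= gt_eqF // powR_gt0 // rho_gt0 ?oo_cc.
Qed.

Lemma f0 : f 0 = 0.
Proof. by rewrite /fratio u0 oppr0 powR0 ?mul0r // gt_eqF. Qed.

Lemma f_ge0 r : 0 <= f r.
Proof. by rewrite /fratio divr_ge0 // powR_ge0. Qed.

Lemma f_continuous : {within `[0, Rad], continuous f}.
Proof.
apply/within_itv_continuousP => r hr.
have near_cc (P : R -> Prop) : (forall t, 0 <= t <= Rad -> P t) ->
    \forall t \near within [set` `[0, Rad]] (nbhs r), P t.
  by move=> HP; apply: filterS (withinT _ _) => t; rewrite /= in_itv => /HP.
have hA : (fun t => (- u t) `^ (p - 1)) @ within [set` `[0, Rad]] (nbhs r)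
    --> (- u r) `^ (p - 1).
  apply: cvg_powR => //; first by rewrite oppr_ge0 u_le0.
    by apply: near_cc => t ht; rewrite oppr_ge0 u_le0.
  by apply: cvgN; apply: (within_itv_continuousP _ _ _).1 u_cont r hr.
have hB : (fun t => (rho t) `^ (p - 1)) @ within [set` `[0, Rad]] (nbhs r)
    --> (rho r) `^ (p - 1).
  apply: cvg_powR => //; first by rewrite ltW // rho_gt0.
    by apply: near_cc => t ht; rewrite ltW // rho_gt0.
  by apply: is_rel_derive_cvg (rho_u hr).
by apply: cvgM hA (cvgV _ hB); rewrite gt_eqF // powR_gt0 // rho_gt0.
Qed.

Lemma f_is_derive r : 0 < r < Rad ->
  is_derive r 1 f (h r - (n%:R - 1) / r * f r).
Proof.
move=> hr; have [r0 rR] := andP hr.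
have ur : 0 < - u r by rewrite oppr_gt0 u_lt0.
have rhor : 0 < rho r by rewrite rho_gt0 ?oo_cc.
have dA : is_derive r 1 (fun t => (- u t) `^ (p - 1))
    ((p - 1) * (- u r) `^ (p - 1 - 1) * (- derive1 u r)).
  have du : is_derive r 1 (fun t => - u t) (- derive1 u r).
    exact: is_deriveN (u_is_derive hr).
  exact: (@is_derive1_comp R (fun y => y `^ (p - 1)) (fun t => - u t) r _ _
    (is_derive1_powR _ ur) du).
have dB : is_derive r 1 (fun t => (rho t) `^ (p - 1))
    ((p - 1) * (rho r) `^ (p - 1 - 1) * u r).
  exact: (@is_derive1_comp R (fun y => y `^ (p - 1)) rho r _ _
    (is_derive1_powR _ rhor) (rho_is_derive hr)).
have B0 : (rho r) `^ (p - 1) != 0 by rewrite gt_eqF // powR_gt0.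
have := is_deriveM dA (@is_deriveV R (fun t => rho t `^ (p - 1)) r _ 1 B0 dB).
rewrite (_ : _ * _ = f); last by apply/funext => t.
move/is_derive_eq; apply; move: (ode hr).
rewrite /fratio (_ : p - 2 = p - 1 - 1); last by ring.
have EB : rho r `^ (p - 1) = rho r * rho r `^ (p - 1 - 1).
  by rewrite mulr_powRB1 ?ltW.
have PB : 0 < rho r `^ (p - 1 - 1) by rewrite powR_gt0.
have P2 : 0 < (- u r) `^ (p - 1 - 1) by rewrite powR_gt0.
rewrite EB; set a := (- u r) `^ (p - 1); set PB' := rho r `^ (p - 1 - 1).
set P2' := (- u r) `^ (p - 1 - 1); set d := derive1 u r => E.
have -> : d = ((n%:R - 1) / r * a - lam * (rho r * PB')) / ((p - 1) * P2').
  by rewrite -E; field; rewrite !gt_eqF.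
by rewrite /GRing.scale /=; field; rewrite !gt_eqF.
Qed.

Lemma G_is_derive r : 0 < r < Rad -> is_derive r 1 (fun s => G s) (r ^+ n.-1 * h r).
Proof.
move=> hr; have [r0 rR] := andP hr.
have := is_deriveM (is_derive_exprn n.-1 r) (f_is_derive hr).
rewrite (_ : (fun s => s ^+ n.-1) * f = fun s => G s); last by apply/funext.
move/is_derive_eq; apply; rewrite /GRing.scale /= -n1E.
have -> : r ^+ n.-1 = r * r ^+ n.-1.-1 by rewrite -exprS prednK // -subn1 subn_gt0.
by field; rewrite !gt_eqF ?rho_gt0 ?oo_cc.
Qed.

Lemma G_continuous : {within `[0, Rad], continuous (fun r => G r)}.
Proof.
apply/within_itv_continuousP => r hr; apply: cvgM.
  exact: cvg_within_filter (@exprn_continuous R n.-1 r).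
exact: (within_itv_continuousP _ _ _).1 f_continuous r hr.
Qed.

Lemma f_q r : 0 <= r <= Rad -> f r = q r `^ (p - 1).
Proof.
move=> hr; have rp := rho_gt0 hr.
rewrite /fratio -{1}(divfK (lt0r_neq0 rp) (- u r)) powRM ?mulfK ?gt_eqF ?powR_gt0 //.
  by apply: divr_ge0; [rewrite oppr_ge0 u_le0 | rewrite ltW].
exact: ltW.
Qed.

Lemma h_le r s : 0 <= r <= Rad -> 0 <= s <= Rad -> f r <= f s -> h r <= h s.
Proof.
move=> hr hs frs.
have q_ge0 t : 0 <= t <= Rad -> 0 <= q t.
  by move=> ht; rewrite divr_ge0 ?oppr_ge0 ?u_le0 // ltW // rho_gt0.
have qrs : q r <= q s.
  rewrite leNgt; apply/negP => /(gt0_ltr_powR p1_gt0).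
  by rewrite -f_q // -f_q // ?nnegrE ?q_ge0 // => /(_ isT isT); rewrite ltNge frs.
rewrite lerD2l; apply: ler_wpM2l; first exact: ltW.
exact: ler_pM (q_ge0 _ hr) (f_ge0 r) qrs frs.
Qed.

Lemma G_chord r1 r2 : 0 <= r1 -> r1 < r2 -> r2 <= Rad ->
  exists2 xi, r1 < xi < r2 & G r2 - G r1 = h xi / n%:R * (r2 ^+ n - r1 ^+ n).
Proof.
move=> r10 r12 r2R.
have inner x : x \in `]r1, r2[ -> 0 < x < Rad.
  by rewrite in_itv /= => /andP [x1 x2]; apply/andP; split; lra.
have Gc : {within `[r1, r2], continuous (fun r => G r)}.
  apply: continuous_subspaceW G_continuous => x; rewrite /= !in_itv /=.
  by move=> /andP [x1 x2]; apply/andP; split; lra.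
have Xc : {within `[r1, r2], continuous (fun r : R => r ^+ n)}.
  exact: continuous_subspaceT (@exprn_continuous R n).
have dX0 x : x \in `]r1, r2[ -> n%:R * x ^+ n.-1 != 0.
  by move/inner/andP => [x0 _]; rewrite gt_eqF // mulr_gt0 // exprn_gt0.
have [xi xi_in E] := cauchy_MVT r12 Gc Xc (fun x hx => G_is_derive (inner x hx))
  (fun x _ => is_derive_exprn n x) dX0.
exists xi; first by move: xi_in; rewrite in_itv.
have /andP [xi0 _] := inner xi xi_in.
have dn : r2 ^+ n - r1 ^+ n != 0.
  by rewrite subr_eq0 gt_eqF // ltrXn2r // -lt0n ltnW.
rewrite -[LHS](divfK dn) -E; field.
by rewrite !gt_eqF ?exprn_gt0 ?rho_gt0 ?oo_cc ?inner.
Qed.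

(* [f' k = 0] gives [h k = (n-1) f k / k]; the chord of [G] over [0, k] then
   forces [G k <= (n-1)/n G k], so [G k], hence [f k], cannot be positive. *)
Lemma f_max_le0 k : 0 < k < Rad -> (forall t, 0 <= t <= k -> f t <= f k) ->
  is_derive k 1 f 0 -> f k <= 0.
Proof.
move=> hk kmax dk; have [k0 kR] := andP hk.
rewrite leNgt; apply/negP => fk.
have hkE : h k = (n%:R - 1) / k * f k.
  have [_ f'k] := f_is_derive hk; have [_ f'k0] := dk.
  by apply/eqP; rewrite -subr_eq0 -f'k f'k0.
have [xi /andP [xi0 xik] E] := G_chord (lexx 0) k0 (ltW kR).
have hxi : h xi <= h k.
  apply: h_le; rewrite ?oo_cc //; first by apply/andP; split; lra.
  by apply: kmax; apply/andP; split; lra.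
have zn : (0 : R) ^+ n = 0 by rewrite expr0n gtn_eqF // ltnW.
have hkG : h k / n%:R * k ^+ n = (n%:R - 1) / n%:R * G k.
  have -> : k ^+ n = k * k ^+ n.-1 by rewrite -exprS prednK // ltnW.
  by rewrite hkE; field; rewrite !gt_eqF.
have Gk_le : G k <= (n%:R - 1) / n%:R * G k.
  move: E; rewrite f0 mulr0 zn !subr0 => GkE; rewrite {1}GkE.
  by rewrite -hkG ler_pM2r ?exprn_gt0 // ler_pM2r ?invr_gt0.
have Gk : 0 < G k by rewrite mulr_gt0 // exprn_gt0.
have : (n%:R - 1) / n%:R < 1 :> R by rewrite ltr_pdivrMr // mul1r; lra.
nra.
Qed.

Lemma f_nondecreasing s c : 0 < s -> s <= c -> c < Rad -> f s <= f c.
Proof.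
move=> s0 sc cR; rewrite leNgt; apply/negP => fcs.
have c0 : 0 < c := lt_le_trans s0 sc.
have fc : {within `[0, c], continuous f}.
  apply: continuous_subspaceW f_continuous => x; rewrite /= !in_itv /=.
  by move=> /andP [x0 xc]; apply/andP; split; lra.
have [k /[!in_itv] /= /andP [k0 kc] kmax] := EVT_max (ltW c0) fc.
have fsk : f s <= f k by apply: kmax; rewrite in_itv /= sc ltW.
have fk : 0 < f k by have := f_ge0 c; lra.
have k0' : 0 < k.
  by rewrite lt_neqAle k0 andbT; apply: contraTneq _ fk => <-; rewrite f0 ltxx.
have kc' : k < c.
  by rewrite lt_neqAle kc andbT; apply: contraTneq _ fsk => ->; rewrite -ltNge.
have hk : 0 < k < Rad by apply/andP; split; lra.
have dk : is_derive k 1 f 0.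
  apply: (derive1_at_max (ltW c0)); last 2 first.
  - by rewrite in_itv /= k0'.
  - by move=> t /[!in_itv] /= /andP [t0 tc]; apply: kmax; rewrite in_itv /= !ltW.
  move=> t /[!in_itv] /= /andP [t0 tc].
  by case: (@f_is_derive t); first by apply/andP; split; lra.
have kmax' t : 0 <= t <= k -> f t <= f k.
  by case/andP => t0 tk; apply: kmax; rewrite in_itv /= t0 (le_trans tk).
by have := f_max_le0 hk kmax' dk; rewrite leNgt fk.
Qed.

Let root_le_Rad z : 0 <= z -> z <= Rad ^+ n -> z `^ n%:R^-1 <= Rad.
Proof.
move=> z0 zR; rewrite -[X in _ <= X](powRV_exprn (ltnW n_gt1) (ltW Rad_gt0)).
have n0 : 0 <= n%:R^-1 :> R by rewrite invr_ge0 ltW.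
by apply: (ge0_ler_powR n0); rewrite ?nnegrE ?exprn_ge0 // ltW.
Qed.

Lemma gfun_G z : 0 <= z -> gfun n f z = G (z `^ n%:R^-1).
Proof.
move=> z0; rewrite /gfun mulrC; congr (_ * _).
rewrite -powR_mulrn ?powR_ge0 // -powRrM -n1E; congr (z `^ _).
by field; rewrite gt_eqF.
Qed.

Lemma g_chord z1 z2 : 0 <= z1 -> z1 < z2 -> z2 <= Rad ^+ n ->
  exists2 xi, z1 `^ n%:R^-1 < xi < z2 `^ n%:R^-1 &
    gfun n f z2 - gfun n f z1 = h xi / n%:R * (z2 - z1).
Proof.
move=> z10 z12 z2R.
have z20 : 0 <= z2 by rewrite (le_trans z10) ?ltW.
have n0 : (0 < n)%N by rewrite ltnW.
rewrite !gfun_G //.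
have r12 : z1 `^ n%:R^-1 < z2 `^ n%:R^-1.
  by apply: gt0_ltr_powR; rewrite ?invr_gt0 ?nnegrE.
have [xi hxi E] := G_chord (powR_ge0 _ _) r12 (root_le_Rad z20 z2R).
by exists xi; rewrite // E !exprn_powRV.
Qed.

Lemma g_convex : convex_on_itv 0 (Rad ^+ n) (gfun n f).
Proof.
apply: convex_on_itv_slopes => x y z x0 xy yz zR.
have y0 : 0 <= y by rewrite (le_trans x0) ?ltW.
have [xi1 /andP [a1 b1] ->] := g_chord x0 xy (ltW (lt_le_trans yz zR)).
have [xi2 /andP [a2 b2] ->] := g_chord y0 yz zR.
rewrite !mulfK ?subr_eq0 ?gt_eqF ?subr_gt0 //.
have xi10 : 0 < xi1 by apply: le_lt_trans a1; apply: powR_ge0.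
have xi2R : xi2 < Rad.
  by apply: lt_le_trans b2 (root_le_Rad _ zR); rewrite (le_trans y0) ?ltW.
have x12 : xi1 <= xi2 by rewrite ltW // (lt_trans b1).
rewrite ler_pM2r ?invr_gt0 //; apply: h_le; last exact: f_nondecreasing.
  by rewrite !ltW // (le_lt_trans x12).
by rewrite !ltW // (lt_le_trans xi10).
Qed.

End RadialEigenfunction.

Theorem theorem4p5 (R : realType) (n : nat) (p Rad beta lam : R)
  (rho drho : R -> R) :
  (2 <= n)%N -> 1 < p -> 0 < Rad -> 0 < beta ->
  (* rho in C^infty(]0,R[) cap C^1([0,R]), drho = rho' on [0,R] *)
  Cinf_open 0 Rad rho ->
  C1_closed_with 0 Rad rho drho ->
  (* rho positive and decreasing on [0,R] *)
  (forall r, 0 <= r <= Rad -> 0 < rho r) ->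
  (forall r s, 0 <= r <= Rad -> 0 <= s <= Rad -> r <= s -> rho s <= rho r) ->
  (* the ODE on ]0,R[, with lam = ell_1(beta, W_R) *)
  (forall r, 0 < r < Rad ->
     - (p - 1) * (- drho r) `^ (p - 2) * derive1 drho r
     + (n%:R - 1) / r * (- drho r) `^ (p - 1)
     = lam * (rho r) `^ (p - 1)) ->
  drho 0 = 0 ->
  - (- drho Rad) `^ (p - 1) + beta * (rho Rad) `^ (p - 1) = 0 ->
  convex_on_itv 0 (Rad ^+ n) (gfun n (fratio p rho drho)).
Proof.
move=> n_gt1 p_gt1 Rad_gt0 beta_gt0 rho_Cinf [drho_cont rho_drho].
exact: g_convex.
Qed.
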